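(* Let $C>0$ and let $n\ge N\ge1$ be integers. Let $\mathcal{C}^+_{n,C}=\{f\in\mathbb{R}^n: -C\le f[1]\le\dots\le f[n]\le C\}$. For $j=0,\dots,N-1$ define $h_j^+\in\mathbb{R}^n$ by $h_j^+[i]=0$ if $i\le\lfloor jn/N\rfloor$ and $h_j^+[i]=1$ otherwise, and let $H_+=\mathrm{span}(h_0^+,\dots,h_{N-1}^+)$. Set $\delta=2\sqrt2\,C/\sqrt N$. Then for every $f\in\mathcal{C}^+_{n,C}$, $$\inf_{h\in H_+}\|f-h\|_n\le\delta,$$ where $\|v\|_n^2=\frac1n\sum_{i=1}^nv[i]^2$. *)

From HB Require Import structures.
From mathcomp Require Import all_boot all_order all_algebra.
From mathcomp Require Import all_classical all_reals.
Set Implicit Arguments. Unset Strict Implicit. Unset Printing Implicit Defensive.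
Import Order.TTheory GRing.Theory Num.Theory.
Local Open Scope ring_scope.
Local Open Scope classical_set_scope.

(* Vectors in R^n are functions 'I_n -> R; index i : 'I_n corresponds to the
   paper's index i+1 (paper indices run from 1 to n). *)

Definition monotone_cone (R : realType) (n : nat) (C : R) : set ('I_n -> R) :=
  [set f | (forall i : 'I_n, - C <= f i /\ f i <= C) /\
           (forall i j : 'I_n, (i <= j)%N -> f i <= f j)].

Definition hplus (R : realType) (n N : nat) (j : nat) : 'I_n -> R :=
  fun i => if (i.+1 <= (j * n) %/ N)%N then 0 else 1.

Definition Hplus (R : realType) (n N : nat) : set ('I_n -> R) :=
  [set h | exists c : 'I_N -> R,
     h = (fun i => \sum_(j < N) c j * @hplus R n N j i)].

Definition empnorm (R : realType) (n : nat) (v : 'I_n -> R) : R :=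
  Num.sqrt ((n%:R)^-1 * \sum_(i < n) v i ^+ 2).

From HB Require Import structures.
From mathcomp Require Import all_boot all_order all_algebra.
From mathcomp Require Import all_classical all_reals.
From mathcomp Require Import ring lra zify.
Set Implicit Arguments. Unset Strict Implicit. Unset Printing Implicit Defensive.
Import Order.TTheory GRing.Theory Num.Theory.
Local Open Scope ring_scope.
Local Open Scope classical_set_scope.

(* Split the indices at the breakpoints floor(j n / N) into N blocks of length
   at most 2n/N, and approximate f on each block by its value g_j at the left
   end of the block; this step function lies in H_+.  On block j the error is
   at most D_j = g_(j+1) - g_j, where g_N := C.  Since 0 <= D_j <= 2C and the
   D_j telescope to at most 2C, the sum of the D_j^2 is at most 4C^2, so the
   squared error is at most (2n/N) 4C^2 = 8 n C^2 / N. *)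

Lemma sum_step_indicators (R : pzSemiRingType) (b : nat -> nat)
    (c : nat -> R) (N j i : nat) :
  {homo b : k l / (k <= l)%N} -> (j < N)%N -> (b j <= i < b j.+1)%N ->
  \sum_(k < N) c k * (if (i < b k)%N then 0 else 1) = \sum_(k < j.+1) c k.
Proof.
move=> b_mono jN /andP[bj_le_i i_lt_bj1].
rewrite (big_ord_widen N c jN) [RHS]big_mkcond /=; apply: eq_bigr => k _.
case: (ltnP k j.+1) => [kj | jk].
- rewrite ifF ?mulr1 //; have := b_mono k j kj; lia.
- rewrite ifT ?mulr0 //; have := b_mono _ _ jk; lia.
Qed.

Definition increments (R : zmodType) (g : nat -> R) (k : nat) : R :=
  if k is k'.+1 then g k - g k' else g 0%N.

Lemma sum_increments (R : zmodType) (g : nat -> R) (j : nat) :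
  \sum_(k < j.+1) increments g k = g j.
Proof.
by elim: j => [|j IH]; rewrite ?big_ord1 // big_ord_recr /= IH addrC subrK.
Qed.

Lemma big_nat_blocks (R : nmodType) (b : nat -> nat) (F : nat -> R) (N : nat) :
  {homo b : k l / (k <= l)%N} ->
  \sum_(b 0%N <= i < b N) F i = \sum_(j < N) \sum_(b j <= i < b j.+1) F i.
Proof.
move=> b_mono; elim: N => [|N IH]; first by rewrite big_ord0 big_geq.
by rewrite big_ord_recr /= -IH -big_cat_nat ?b_mono.
Qed.

Lemma sum_sqr_increments_le (R : realFieldType) (g : nat -> R) (C : R) (N : nat) :
  {homo g : k l / (k <= l)%N >-> k <= l} -> (forall k, - C <= g k <= C) ->
  \sum_(j < N) (g j.+1 - g j) ^+ 2 <= 4 * C ^+ 2.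
Proof.
move=> g_mono g_bound.
have incr_le j : (g j.+1 - g j) ^+ 2 <= 2 * C * (g j.+1 - g j).
  have := g_mono _ _ (leqnSn j); have := g_bound j; have := g_bound j.+1.
  move=> /andP[? ?] /andP[? ?] ?; rewrite expr2; nra.
apply: (@le_trans _ _ (\sum_(j < N) 2 * C * (g j.+1 - g j))).
  by apply: ler_sum => j _; exact: incr_le.
rewrite -mulr_sumr -(big_mkord xpredT (fun j => g j.+1 - g j)) telescope_sumr //.
have := g_bound 0%N; have := g_bound N => /andP[? ?] /andP[? ?]; nra.
Qed.

Lemma empnorm_le (R : realType) (n : nat) (v : 'I_n -> R) (e : R) :
  (0 < n)%N -> 0 <= e -> \sum_(i < n) v i ^+ 2 <= n%:R * e ^+ 2 ->
  empnorm v <= e.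
Proof.
move=> n_gt0 e_ge0 sum_le.
rewrite -[e]ger0_norm // -sqrtr_sqr ler_sqrt ?sqr_ge0 //.
by rewrite ler_pdivrMl ?ltr0n.
Qed.

Definition breakpoint (n N k : nat) : nat := (k * n %/ N)%N.

Section Breakpoints.

Variables n N : nat.

Lemma breakpoint_mono : {homo breakpoint n N : k l / (k <= l)%N}.
Proof. by move=> k l kl; apply: leq_div2r; rewrite leq_mul2r kl orbT. Qed.

Lemma breakpoint0 : breakpoint n N 0 = 0%N.
Proof. by rewrite /breakpoint mul0n div0n. Qed.

Hypothesis N_gt0 : (0 < N)%N.

Lemma breakpointN : breakpoint n N N = n.
Proof. by rewrite /breakpoint mulKn. Qed.

Lemma breakpoint_gap (j : nat) : (N <= n)%N ->
  ((breakpoint n N j.+1 - breakpoint n N j) * N <= 2 * n)%N.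
Proof.
move=> Nn; rewrite /breakpoint.
have := leq_divM (j.+1 * n) N; have := divn_eq (j * n) N.
have := ltn_pmod (j * n) N_gt0; have : (j.+1 * n = j * n + n)%N by rewrite mulSn addnC.
nia.
Qed.

End Breakpoints.

Section Approximant.

Variables (R : realType) (C : R) (n N : nat) (f : 'I_n -> R).
Hypotheses (N_gt0 : (0 < N)%N) (N_le_n : (N <= n)%N).
Hypothesis f_cone : monotone_cone C f.

Definition extension (k : nat) : R := if insub k is Some i then f i else C.

Lemma extension_ord (i : 'I_n) : extension i = f i.
Proof. by rewrite /extension valK. Qed.

Lemma extension_bound (k : nat) : - C <= extension k <= C.
Proof.
have C_ge0 : 0 <= C.
  have [bounds _] := f_cone.
  have [] := bounds (Ordinal (leq_trans N_gt0 N_le_n)); lra.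
rewrite /extension; case: insubP => [i _ _ | _]; last by apply/andP; split; lra.
by case: f_cone => /(_ i) [-> ->].
Qed.

Lemma extension_mono : {homo extension : k l / (k <= l)%N >-> k <= l}.
Proof.
move=> k l kl; rewrite /extension.
case: insubP => [i _ ki | kn]; case: insubP => [j l_lt_n lj | _].
- by case: f_cone => _; apply; rewrite ki lj.
- by case: f_cone => /(_ i) [].
- by move: kn; rewrite -leqNgt; lia.
- by [].
Qed.

Definition knot_value (j : nat) : R := extension (breakpoint n N j).

Definition step_fit (k : nat) : R :=
  \sum_(j < N) increments knot_value j *
    (if (k < breakpoint n N j)%N then 0 else 1).

Lemma step_fit_in_Hplus : @Hplus R n N (fun i : 'I_n => step_fit i).
Proof. by exists (fun j : 'I_N => increments knot_value j). Qed.

Lemma step_fit_block (j i : nat) : (j < N)%N ->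
  (breakpoint n N j <= i < breakpoint n N j.+1)%N -> step_fit i = knot_value j.
Proof.
move=> jN iblock.
by rewrite /step_fit (sum_step_indicators _ (@breakpoint_mono n N) jN iblock) sum_increments.
Qed.

Lemma step_fit_sqr_error :
  \sum_(i < n) (f i - step_fit i) ^+ 2 <= n%:R * (8 * C ^+ 2 / N%:R).
Proof.
pose D j := knot_value j.+1 - knot_value j.
have block_error j : (j < N)%N ->
    \sum_(breakpoint n N j <= i < breakpoint n N j.+1)
      (extension i - step_fit i) ^+ 2
    <= D j ^+ 2 *+ (breakpoint n N j.+1 - breakpoint n N j).
  move=> jN; rewrite -sumr_const_nat; apply: ler_sum_nat => i iblock.
  rewrite (step_fit_block jN iblock) /D.
  case/andP: iblock => bj_le_i i_lt_bj1.
  have := extension_mono bj_le_i; have := extension_mono (ltnW i_lt_bj1).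
  rewrite /knot_value !expr2 => ? ?; nra.
have gap_weight j : D j ^+ 2 *+ (breakpoint n N j.+1 - breakpoint n N j)
    <= D j ^+ 2 * (2 * n%:R / N%:R).
  rewrite -mulr_natr ler_wpM2l ?sqr_ge0 // ler_pdivlMr ?ltr0n //.
  by rewrite -natrM -natrM ler_nat breakpoint_gap.
have sqr_increments : \sum_(j < N) D j ^+ 2 <= 4 * C ^+ 2.
  apply: sum_sqr_increments_le => [k l kl | k].
  - exact/extension_mono/breakpoint_mono.
  - exact: extension_bound.
have -> : \sum_(i < n) (f i - step_fit i) ^+ 2 =
    \sum_(breakpoint n N 0 <= i < breakpoint n N N) (extension i - step_fit i) ^+ 2.
  by rewrite breakpoint0 breakpointN // big_mkord; apply: eq_bigr => i _; rewrite extension_ord.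
rewrite big_nat_blocks; last exact: breakpoint_mono.
apply: (@le_trans _ _ (\sum_(j < N) D j ^+ 2 * (2 * n%:R / N%:R))).
  by apply: ler_sum => j _; exact: le_trans (block_error j (ltn_ord j)) (gap_weight j).
rewrite -mulr_suml; apply: le_trans (ler_wpM2r _ sqr_increments) _.
  by rewrite divr_ge0 ?mulr_ge0 ?ler0n.
by rewrite (_ : 4 * C ^+ 2 * (2 * n%:R / N%:R) = n%:R * (8 * C ^+ 2 / N%:R)) //; ring.
Qed.

End Approximant.

Theorem lemma5 (R : realType) (C : R) (n N : nat) :
  0 < C -> (1 <= N)%N -> (N <= n)%N ->
  forall f : 'I_n -> R, monotone_cone C f ->
  inf [set empnorm (fun i => f i - h i) | h in @Hplus R n N] <=
    2 * Num.sqrt 2 * C / Num.sqrt (N%:R).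
Proof.
move=> C_gt0 N_gt0 N_le_n f f_cone.
have norms_ge0 : has_lbound [set empnorm (fun i => f i - h i) | h in @Hplus R n N].
  by exists 0 => _ [h _ <-]; exact: sqrtr_ge0.
apply: le_trans (ge_inf norms_ge0 _) _.
  by exists (fun i => step_fit C N f i); first exact: step_fit_in_Hplus.
apply: empnorm_le; first exact: leq_trans N_le_n.
  by rewrite divr_ge0 ?sqrtr_ge0 // !mulr_ge0 ?sqrtr_ge0 ?ltW.
have -> : (2 * Num.sqrt 2 * C / Num.sqrt N%:R) ^+ 2 = 8 * C ^+ 2 / N%:R.
  by rewrite expr_div_n !exprMn !sqr_sqrtr ?ler0n //; ring.
exact: step_fit_sqr_error.
Qed.
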